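(* Let $x,y\in(0,1)$ and $n\in\mathbb{N}$. Let $X_1,X_2\sim B(n,x)$ be independent, $Y_1,Y_2\sim B(n,y)$ be independent, and $S_{2n}^*\sim B\bigl(2n,\tfrac{x+y}{2}\bigr)$. Then \[ F_{S_{2n}^*}\leqslant_{\mathrm{cx}}\tfrac12\bigl(F_{X_1+X_2}+F_{Y_1+Y_2}\bigr), \] i.e. $\mathbb{E}\,f(S_{2n}^* )\le \tfrac12\bigl(\mathbb{E}\,f(X_1+X_2)+\mathbb{E}\,f(Y_1+Y_2)\bigr)$ for every convex $f:\mathbb{R}\to\mathbb{R}$.
   Context: $B(n,p)$ denotes the binomial distribution: $P(X=k)=\binom nk p^k(1-p)^{n-k}$, $k=0,\dots,n$. $F_X(t)=P(X<t)$. For distribution functions $G,H$ of probability measures with finite first moment, $G\leqslant_{\mathrm{cx}}H$ means $\int f\,dG\le\int f\,dH$ for all convex $f:\mathbb{R}\to\mathbb{R}$ for which the integrals exist; a convex combination of distribution functions is the distribution function of the corresponding mixture. *)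

From Stdlib Require Import Reals.
Open Scope R_scope.

Definition binom_pmf (n : nat) (p : R) (k : nat) : R :=
  C n k * p ^ k * (1 - p) ^ (n - k).

Definition E_binom (n : nat) (p : R) (f : R -> R) : R :=
  sum_f_R0 (fun k => binom_pmf n p k * f (INR k)) n.

Definition E_sum_indep_binom (n : nat) (p : R) (f : R -> R) : R :=
  sum_f_R0 (fun i =>
    sum_f_R0 (fun j => binom_pmf n p i * binom_pmf n p j * f (INR i + INR j)) n) n.

Definition convex_fun (f : R -> R) : Prop :=
  forall a b t : R, 0 <= t <= 1 ->
    f (t * a + (1 - t) * b) <= t * f a + (1 - t) * f b.

From Stdlib Require Import Reals Lra Lia.
Open Scope R_scope.

(* Write [B_p g (t) = (1 - p) g(t) + p g(t + 1)], so that [B_p^m g (t) = E g(t + X)]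
   for [X ~ B(m, p)], and both sides of the theorem are iterates of such operators
   applied to [f] at [0].  With [z = (x + y) / 2] we have [B_z = (B_x + B_y) / 2], and
   induction on [m] reduces [B_z^m <= (B_x^m + B_y^m) / 2] on convex functions to the
   cross inequality [B_y B_x^m + B_x B_y^m <= B_x^(m+1) + B_y^(m+1)].  The difference
   of its two sides is [(x - y) (B_x^m - B_y^m) (Delta g)], which is nonnegative since
   [Delta g] is nondecreasing and the mean of a nondecreasing function of [t + X]
   increases with [p]. *)

Definition binom_step (p : R) (g : R -> R) (t : R) : R :=
  (1 - p) * g t + p * g (t + 1).

Definition binom_iter (p : R) (m : nat) (g : R -> R) : R -> R :=
  Nat.iter m (binom_step p) g.

Definition fwd_diff (g : R -> R) (t : R) : R := g (t + 1) - g t.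

Definition step_nondecreasing (u : R -> R) : Prop := forall t, u t <= u (t + 1).

Section BinomIter.

Variable p : R.

Lemma binom_iter_S m g t :
  binom_iter p (S m) g t = binom_step p (binom_iter p m g) t.
Proof. reflexivity. Qed.

Lemma binom_iter_S_r m g t :
  binom_iter p (S m) g t = binom_iter p m (binom_step p g) t.
Proof. unfold binom_iter. now rewrite Nat.iter_succ_r. Qed.

Lemma binom_iter_ext m g1 g2 :
  (forall s, g1 s = g2 s) -> forall t, binom_iter p m g1 t = binom_iter p m g2 t.
Proof.
  intros Hg. induction m as [|m IH]; intro t; [apply Hg|].
  rewrite !binom_iter_S. unfold binom_step. now rewrite !IH.
Qed.

Lemma binom_iter_shift m g t :
  binom_iter p m (fun s => g (s + 1)) t = binom_iter p m g (t + 1).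
Proof.
  revert t. induction m as [|m IH]; intro t; [reflexivity|].
  rewrite !binom_iter_S. unfold binom_step. now rewrite !IH.
Qed.

Lemma binom_iter_lincomb m a b g1 g2 t :
  binom_iter p m (fun s => a * g1 s + b * g2 s) t
  = a * binom_iter p m g1 t + b * binom_iter p m g2 t.
Proof.
  revert t. induction m as [|m IH]; intro t; [reflexivity|].
  rewrite !binom_iter_S. unfold binom_step. rewrite !IH. ring.
Qed.

Lemma binom_iter_fwd_diff m g t :
  binom_iter p m (fwd_diff g) t = fwd_diff (binom_iter p m g) t.
Proof.
  rewrite (binom_iter_ext _ _ (fun s => 1 * g (s + 1) + (-1) * g s))
    by (intro s; unfold fwd_diff; ring).
  rewrite binom_iter_lincomb, binom_iter_shift. unfold fwd_diff. ring.
Qed.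

Lemma binom_iter_step_comm r m g t :
  binom_iter p m (binom_step r g) t = binom_step r (binom_iter p m g) t.
Proof.
  unfold binom_step at 1.
  rewrite binom_iter_lincomb, binom_iter_shift. reflexivity.
Qed.

Hypothesis p_prob : 0 <= p <= 1.

Lemma binom_iter_le m g1 g2 :
  (forall s, g1 s <= g2 s) -> forall t, binom_iter p m g1 t <= binom_iter p m g2 t.
Proof.
  intros Hg. induction m as [|m IH]; intro t; [apply Hg|].
  rewrite !binom_iter_S. unfold binom_step.
  pose proof (IH t). pose proof (IH (t + 1)). nra.
Qed.

Lemma binom_iter_step_nondecreasing m u :
  step_nondecreasing u -> step_nondecreasing (binom_iter p m u).
Proof.
  intros Hu t. rewrite <- binom_iter_shift.
  apply binom_iter_le. exact Hu.
Qed.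

Lemma binom_iter_fwd_diff_nondecreasing m g :
  step_nondecreasing (fwd_diff g) -> step_nondecreasing (fwd_diff (binom_iter p m g)).
Proof.
  intros Hg t. rewrite <- !binom_iter_fwd_diff.
  now apply binom_iter_step_nondecreasing.
Qed.

End BinomIter.

Lemma binom_iter_le_prob x y m u :
  0 <= x <= 1 -> 0 <= y <= 1 -> x <= y -> step_nondecreasing u ->
  forall t, binom_iter x m u t <= binom_iter y m u t.
Proof.
  intros Hx Hy Hxy. revert u.
  induction m as [|m IH]; intros u Hu t; [apply Rle_refl|].
  rewrite !binom_iter_S_r.
  apply Rle_trans with (binom_iter x m (binom_step y u) t).
  - apply binom_iter_le; [exact Hx|].
    intro s. unfold binom_step. pose proof (Hu s). nra.
  - apply IH. exact (binom_iter_step_nondecreasing y Hy 1 u Hu).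
Qed.

Lemma binom_iter_cross x y m g :
  0 <= x <= 1 -> 0 <= y <= 1 -> step_nondecreasing (fwd_diff g) ->
  forall t,
    binom_step y (binom_iter x m g) t + binom_step x (binom_iter y m g) t
    <= binom_iter x (S m) g t + binom_iter y (S m) g t.
Proof.
  intros Hx Hy Hg t. rewrite !binom_iter_S.
  assert (Gap : binom_step x (binom_iter x m g) t + binom_step y (binom_iter y m g) t
      - binom_step y (binom_iter x m g) t - binom_step x (binom_iter y m g) t
      = (x - y) * (binom_iter x m (fwd_diff g) t - binom_iter y m (fwd_diff g) t)).
  { rewrite !binom_iter_fwd_diff. unfold binom_step, fwd_diff. ring. }
  destruct (Rle_dec x y) as [Hxy|Hyx].
  - pose proof (binom_iter_le_prob x y m _ Hx Hy Hxy Hg t). nra.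
  - pose proof (binom_iter_le_prob y x m _ Hy Hx ltac:(lra) Hg t). nra.
Qed.

Lemma binom_iter_midpoint_le x y m g :
  0 <= x <= 1 -> 0 <= y <= 1 -> step_nondecreasing (fwd_diff g) ->
  forall t, binom_iter ((x + y) / 2) m g t <= / 2 * (binom_iter x m g t + binom_iter y m g t).
Proof.
  intros Hx Hy. set (z := (x + y) / 2). revert g.
  induction m as [|m IH]; intros g Hg t; [simpl; lra|].
  assert (Split : forall r, binom_iter r m (binom_step z g) t
      = / 2 * binom_iter r m (binom_step x g) t + / 2 * binom_iter r m (binom_step y g) t).
  { intro r. rewrite <- binom_iter_lincomb.
    apply binom_iter_ext. intro s. unfold binom_step, z. field. }
  pose proof (IH (binom_step z g) (binom_iter_fwd_diff_nondecreasing z ltac:(unfold z; lra) 1 g Hg) t) as IHz.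
  rewrite (Split x), (Split y), (binom_iter_step_comm x y), (binom_iter_step_comm y x) in IHz.
  pose proof (binom_iter_cross x y m g Hx Hy Hg t).
  rewrite !binom_iter_S_r in *. lra.
Qed.

Lemma C_0 n : C n 0 = 1.
Proof. unfold C. rewrite Nat.sub_0_r. simpl. field. apply INR_fact_neq_0. Qed.

Lemma C_diag n : C n n = 1.
Proof. unfold C. rewrite Nat.sub_diag. simpl. field. apply INR_fact_neq_0. Qed.

(* [binom_pmf m p k] is not [0] for [k > m] (truncated subtraction), hence this extension. *)
Definition binom_pmf_ext (m : nat) (p : R) (k : nat) : R :=
  if (k <=? m)%nat then binom_pmf m p k else 0.

Lemma binom_pmf_S m p k : (k <= S m)%nat ->
  binom_pmf (S m) p k
  = (1 - p) * binom_pmf_ext m p k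
    + p * match k with 0%nat => 0 | S j => binom_pmf_ext m p j end.
Proof.
  intros Hk. unfold binom_pmf_ext. destruct k as [|j].
  - simpl (0 <=? m)%nat. cbv iota. unfold binom_pmf.
    rewrite !C_0, !Nat.sub_0_r. simpl. ring.
  - destruct (Nat.eq_dec j m) as [->|Hj].
    + rewrite (proj2 (Nat.leb_le m m)), (proj2 (Nat.leb_gt (S m) m)) by lia.
      unfold binom_pmf. rewrite !C_diag, !Nat.sub_diag. simpl. ring.
    + rewrite (proj2 (Nat.leb_le (S j) m)), (proj2 (Nat.leb_le j m)) by lia.
      unfold binom_pmf. rewrite <- pascal by lia.
      replace (S m - S j)%nat with (m - j)%nat by lia.
      replace (m - j)%nat with (S (m - S j)) by lia. simpl. ring.
Qed.

Lemma sum_binom_pmf_ext m p (h : nat -> R) d :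
  sum_f_R0 (fun k => binom_pmf_ext m p k * h k) (m + d)
  = sum_f_R0 (fun k => binom_pmf m p k * h k) m.
Proof.
  induction d as [|d IH].
  - rewrite Nat.add_0_r. apply sum_eq. intros i Hi. unfold binom_pmf_ext.
    rewrite (proj2 (Nat.leb_le i m)) by lia. reflexivity.
  - rewrite Nat.add_succ_r, tech5, IH. unfold binom_pmf_ext.
    rewrite (proj2 (Nat.leb_gt (S (m + d)) m)) by lia. ring.
Qed.

Lemma sum_binom_pmf_S m p (h : nat -> R) :
  sum_f_R0 (fun k => binom_pmf (S m) p k * h k) (S m)
  = (1 - p) * sum_f_R0 (fun k => binom_pmf m p k * h k) m
    + p * sum_f_R0 (fun k => binom_pmf m p k * h (S k)) m.
Proof.
  rewrite (sum_eq _ (fun k => binom_pmf_ext m p k * h k * (1 - p)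
      + match k with 0%nat => 0 | S j => binom_pmf_ext m p j end * h k * p))
    by (intros i Hi; rewrite binom_pmf_S by exact Hi; ring).
  rewrite sum_plus, <- !scal_sum.
  replace (S m) with (m + 1)%nat by lia.
  rewrite sum_binom_pmf_ext, (decomp_sum _ (m + 1)) by lia.
  replace (Init.Nat.pred (m + 1)) with (m + 0)%nat by lia.
  rewrite (sum_binom_pmf_ext m p (fun k => h (S k))). ring.
Qed.

Lemma binom_iter_sum p m g t :
  binom_iter p m g t = sum_f_R0 (fun k => binom_pmf m p k * g (t + INR k)) m.
Proof.
  revert t. induction m as [|m IH]; intro t.
  - unfold binom_pmf. simpl. rewrite C_0, Rplus_0_r. ring.
  - rewrite binom_iter_S. unfold binom_step. rewrite !IH, sum_binom_pmf_S.
    f_equal. f_equal. apply sum_eq. intros i _.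
    rewrite S_INR, Rplus_assoc, (Rplus_comm 1). reflexivity.
Qed.

Lemma E_binom_iter m p f : E_binom m p f = binom_iter p m f 0.
Proof.
  rewrite binom_iter_sum. apply sum_eq. intros i _. now rewrite Rplus_0_l.
Qed.

Lemma E_sum_indep_binom_iter n p f :
  E_sum_indep_binom n p f = binom_iter p (2 * n) f 0.
Proof.
  replace (2 * n)%nat with (n + n)%nat by lia.
  unfold binom_iter. rewrite Nat.iter_add. fold (binom_iter p n f).
  fold (binom_iter p n (binom_iter p n f)).
  rewrite binom_iter_sum. apply sum_eq. intros i _.
  rewrite binom_iter_sum, scal_sum. apply sum_eq. intros j _.
  rewrite Rplus_0_l. ring.
Qed.

Lemma convex_fwd_diff_nondecreasing f :
  convex_fun f -> step_nondecreasing (fwd_diff f).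
Proof.
  intros Hf s. unfold fwd_diff.
  pose proof (Hf s (s + 1 + 1) (1 / 2) ltac:(lra)) as Hmid.
  replace (1 / 2 * s + (1 - 1 / 2) * (s + 1 + 1)) with (s + 1) in Hmid by field.
  lra.
Qed.

Theorem proposition2 (x y : R) (n : nat)
  (hx : 0 < x < 1) (hy : 0 < y < 1) :
  forall f : R -> R, convex_fun f ->
    E_binom (2 * n) ((x + y) / 2) f <=
      / 2 * (E_sum_indep_binom n x f + E_sum_indep_binom n y f).
Proof.
  intros f Hf. rewrite E_binom_iter, !E_sum_indep_binom_iter.
  apply binom_iter_midpoint_le; [lra | lra |].
  now apply convex_fwd_diff_nondecreasing.
Qed.
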